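(* Let $X$ be a real linear space, $T$ an infinite index set, and $f, f_t : X \to \overline{\mathbb{R}} := \mathbb{R}\cup\{\pm\infty\}$ ($t \in T$) convex proper functions. Let $M := \bigcap_{t\in T} \operatorname{dom} f_t$, $h:=\sup_{t\in T} f_t$, $\Delta_1 := \operatorname{dom} f\cap\operatorname{dom} h$, and define $$\sup(D) := \sup_{\lambda\in\mathbb{R}_+^{(T)}} \inf_{x\in M}\Big(f(x)+\sum_{t\in T}\lambda_t f_t(x)\Big),\qquad \sup(D_1) := \sup_{s\ge0}\inf_{x\in\Delta_1}\big(f(x)+s\,h(x)\big),$$ and $\inf(P):=\inf\{f(x): f_t(x)\le 0 \text{ for all } t\in T\}$. Then $$\sup(D)\le\sup(D_1)\le\inf(P).$$
   Context: $\operatorname{dom} g := \{x : g(x)<+\infty\}$; a proper function never takes the value $-\infty$ and has nonempty domain. $\mathbb{R}^{(T)}$ is the space of functions $\lambda=(\lambda_t)_{t\in T}:T\to\mathbb{R}$ with finite support $\operatorname{supp}\lambda=\{t:\lambda_t\neq0\}$, and $\mathbb{R}^{(T)}_+$ its elements with all $\lambda_t\ge0$; $\sum_{t\in T}\lambda_t f_t(x)$ means $\sum_{t\in\operatorname{supp}\lambda}\lambda_t f_t(x)$ if $\lambda\ne 0$ and $0$ if $\lambda=0$. Conventions: $\inf\emptyset=+\infty$, $\sup\emptyset=-\infty$. *)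

From HB Require Import structures.
From mathcomp Require Import all_boot all_order all_algebra.
From mathcomp Require Import all_classical all_reals ereal.
Set Implicit Arguments. Unset Strict Implicit. Unset Printing Implicit Defensive.
Import Order.TTheory GRing.Theory Num.Theory.
Local Open Scope classical_set_scope.
Local Open Scope ring_scope.
Local Open Scope ereal_scope.

Definition edom (R : realType) (X : Type) (g : X -> \bar R) : set X :=
  [set x | g x < +oo].

Definition proper_fun (R : realType) (X : Type) (g : X -> \bar R) : Prop :=
  (forall x, g x <> -oo) /\ (exists x, g x < +oo).

(* convexity of an extended-real-valued function = convexity of its epigraph *)
Definition convex_efun (R : realType) (X : lmodType R) (g : X -> \bar R) : Prop :=
  forall (x y : X) (r s a : R), g x <= r%:E -> g y <= s%:E ->
    (0 <= a <= 1)%R ->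
    g (a *: x + (1 - a) *: y)%R <= (a * r + (1 - a) * s)%:E.

Definition supp (R : realType) (T : Type) (lam : T -> R) : set T :=
  [set t | lam t != 0%R].

Definition fin_nonneg (R : realType) (T : Type) (lam : T -> R) : Prop :=
  finite_set (supp lam) /\ (forall t, (0 <= lam t)%R).

Definition lagr_sum (R : realType) (X : Type) (T : choiceType)
  (ft : T -> X -> \bar R) (lam : T -> R) (x : X) : \bar R :=
  \sum_(t \in supp lam) (lam t)%:E * ft t x.

Definition hsup (R : realType) (X : Type) (T : Type) (ft : T -> X -> \bar R)
  (x : X) : \bar R := ereal_sup [set ft t x | t in [set: T]].

Definition M_dom (R : realType) (X : Type) (T : Type) (ft : T -> X -> \bar R)
  : set X := \bigcap_(t in [set: T]) edom (ft t).

Definition supD (R : realType) (X : Type) (T : choiceType)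
  (f : X -> \bar R) (ft : T -> X -> \bar R) : \bar R :=
  ereal_sup [set ereal_inf [set f x + lagr_sum ft lam x | x in M_dom ft]
            | lam in [set lam : T -> R | fin_nonneg lam]].

Definition supD1 (R : realType) (X : Type) (T : Type)
  (f : X -> \bar R) (ft : T -> X -> \bar R) : \bar R :=
  ereal_sup [set ereal_inf [set f x + s%:E * hsup ft x
                           | x in edom f `&` edom (hsup ft)]
            | s in [set s : R | (0 <= s)%R]].

Definition infP (R : realType) (X : Type) (T : Type)
  (f : X -> \bar R) (ft : T -> X -> \bar R) : \bar R :=
  ereal_inf [set f x | x in [set x | forall t, ft t x <= 0]].

From HB Require Import structures.
From mathcomp Require Import all_boot all_order all_algebra.
From mathcomp Require Import all_classical all_reals ereal.
Local Open Scope classical_set_scope.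
Local Open Scope ereal_scope.
Import Order.TTheory.

(* Both inequalities are weak duality.  A multiplier lam of total weight
   s = sum_t lam_t gives sum_t lam_t f_t(x) <= s h(x), and dom h is contained
   in M, so the dual value of (D) at lam is dominated by that of (D_1) at s.
   For s >= 0 and a feasible x we have h(x) <= 0, hence f(x) + s h(x) <= f(x). *)

Section PointwiseSup.
Variables (R : realType) (X T : Type) (ft : T -> X -> \bar R).

Lemma le_hsup t x : ft t x <= hsup ft x.
Proof. by apply: ereal_sup_ubound; exists t. Qed.

Lemma hsup_le x c : (forall t, ft t x <= c) -> hsup ft x <= c.
Proof. by move=> ftc; apply: ge_ereal_sup => _ [t _ <-]. Qed.

Lemma edom_hsup_sub_M_dom : edom (hsup ft) `<=` M_dom ft.
Proof. by move=> x hx t _; apply: le_lt_trans (le_hsup t x) hx. Qed.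

End PointwiseSup.

Section WeakDuality.
Variables (R : realType) (X : Type) (T : choiceType).
Variables (f : X -> \bar R) (ft : T -> X -> \bar R).

Definition total_weight (lam : T -> R) : R := (\sum_(t \in supp lam) lam t)%R.

Lemma lagr_sum_le x lam c : fin_nonneg lam -> (forall t, ft t x <= c) ->
  lagr_sum ft lam x <= (total_weight lam)%:E * c.
Proof.
move=> [fin lam_ge0] ftc.
rewrite /total_weight -fsumEFin // ge0_mule_fsuml => [|t]; last by rewrite lee_fin.
by apply: lee_fsum => // t _; apply: lee_wpmul2l; rewrite ?lee_fin.
Qed.

Lemma supD_le_supD1 : supD f ft <= supD1 f ft.
Proof.
apply: ge_ereal_sup => _ [lam lamP <-]; apply: le_ereal_sup_tmp.
have [_ lam_ge0] := lamP.
exists (ereal_inf [set f x + (total_weight lam)%:E * hsup ft x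
                  | x in edom f `&` edom (hsup ft)]).
  by exists (total_weight lam) => //; apply: fsumr_ge0 => t _; exact: lam_ge0.
apply: le_ereal_inf_tmp => _ [x [_ hx] <-].
apply: ge_ereal_inf; exists (f x + lagr_sum ft lam x).
  by exists x => //; apply: edom_hsup_sub_M_dom.
by apply: leeD2l; apply: lagr_sum_le => // t; apply: le_hsup.
Qed.

Lemma supD1_le_infP : supD1 f ft <= infP f ft.
Proof.
apply: ge_ereal_sup => _ [s s_ge0 <-]; apply: le_ereal_inf_tmp => _ [x feas <-].
have h_le0 : hsup ft x <= 0 by apply: hsup_le.
have [->|fx_fin] := eqVneq (f x) +oo; first exact: leey.
apply: ge_ereal_inf; exists (f x + s%:E * hsup ft x).
  exists x => //; split; first by rewrite /edom /= ltey.
  exact: le_lt_trans h_le0 (ltry 0%R).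
by rewrite -[leRHS]adde0 leeD2l // mule_ge0_le0 ?lee_fin.
Qed.

End WeakDuality.

Theorem lemma3p1 (R : realType) (X : lmodType R) (T : choiceType)
  (f : X -> \bar R) (ft : T -> X -> \bar R) :
  infinite_set [set: T] ->
  convex_efun f -> proper_fun f ->
  (forall t, convex_efun (ft t)) -> (forall t, proper_fun (ft t)) ->
  supD f ft <= supD1 f ft /\ supD1 f ft <= infP f ft.
Proof.
by move=> _ _ _ _ _; split; [exact: supD_le_supD1 | exact: supD1_le_infP].
Qed.
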